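(* Let $G=(V,D,B)$ be a simple mixed graph and $\Sigma$ a positive definite $V\times V$ matrix. Then $\Sigma\in\mathcal{M}_G$ if and only if $\mathcal{R}(\Sigma)\in\mathcal{M}_G$, where $\mathcal{R}(\Sigma)_{ij}=\Sigma_{ij}/\sqrt{\Sigma_{ii}\Sigma_{jj}}$.
   Context: A mixed graph with finite vertex set $V$ is a triple $G=(V,D,B)$ with $D$ a set of ordered pairs $(i,j)$, $i\ne j$ (directed edges) and $B$ a set of unordered pairs $\{i,j\}$, $i\ne j$ (bidirected edges); it is simple if any two distinct nodes are joined by at most one edge. $\mathbb{R}^D_{\mathrm{reg}}$ is the set of real $V\times V$ matrices $\Lambda$ with $\lambda_{ij}=0$ for $(i,j)\notin D$ and $I-\Lambda$ invertible; $\mathit{PD}(B)$ is the set of positive definite symmetric matrices $\Omega$ with $\omega_{ij}=0$ for $i\ne j$, $\{i,j\}\notin B$. $\mathcal{M}_G=\{(I-\Lambda)^{-T}\Omega(I-\Lambda)^{-1}:\Lambda\in\mathbb{R}^D_{\mathrm{reg}},\Omega\in\mathit{PD}(B)\}$. *)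

(* Vertex set V = 'I_n; real field: an arbitrary rcfType
   (the statement is purely algebraic; rcfType provides square roots). *)
From mathcomp Require Import all_boot all_order all_algebra.
Set Implicit Arguments. Unset Strict Implicit. Unset Printing Implicit Defensive.
Import Order.TTheory GRing.Theory Num.Theory.
Local Open Scope ring_scope.

(* A mixed graph on vertices 'I_n: D i j means directed edge i -> j,
   B i j means bidirected edge {i,j}. *)
Record mixed_graph (n : nat) := MixedGraph {
  dir_edge : rel 'I_n;
  bidir_edge : rel 'I_n }.

Definition wf_mixed_graph n (G : mixed_graph n) : Prop :=
  (forall i, ~~ dir_edge G i i) /\ (forall i, ~~ bidir_edge G i i) /\
  (forall i j, bidir_edge G i j = bidir_edge G j i).

Definition simple_mixed_graph n (G : mixed_graph n) : Prop :=
  forall i j : 'I_n, i != j ->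
    ((dir_edge G i j : nat) + (dir_edge G j i : nat) + (bidir_edge G i j : nat) <= 1)%N.

Definition posdef (R : realFieldType) n (S : 'M[R]_n) : Prop :=
  S^T = S /\ forall x : 'cV[R]_n, x != 0 -> 0 < (x^T *m S *m x) 0 0.

Definition RD_reg (R : realFieldType) n (G : mixed_graph n) (L : 'M[R]_n) : Prop :=
  (forall i j, ~~ dir_edge G i j -> L i j = 0) /\ (1%:M - L \in unitmx).

Definition PD_B (R : realFieldType) n (G : mixed_graph n) (O : 'M[R]_n) : Prop :=
  posdef O /\ (forall i j, i != j -> ~~ bidir_edge G i j -> O i j = 0).

Definition model (R : realFieldType) n (G : mixed_graph n) (S : 'M[R]_n) : Prop :=
  exists L O, RD_reg G L /\ PD_B G O /\
    S = (invmx (1%:M - L))^T *m O *m invmx (1%:M - L).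

Definition corr (R : rcfType) n (S : 'M[R]_n) : 'M[R]_n :=
  \matrix_(i, j) (S i j / Num.sqrt (S i i * S j j)).

(** The model of a mixed graph is closed under congruence by invertible
    diagonal matrices: if Σ = (I - Λ)^-T Ω (I - Λ)^-1, then
    D Σ D = (I - Λ')^-T Ω' (I - Λ')^-1 with Λ' = D^-1 Λ D and Ω' = D Ω D,
    and multiplying by diagonal matrices on both sides does not change
    the support of Λ or Ω.  Since R(Σ) = D Σ D with D = diag(Σ_ii^(-1/2)),
    and Σ = D^-1 R(Σ) D^-1, both implications follow. *)
From mathcomp Require Import all_boot all_order all_algebra.
From mathcomp Require Import ring.
Set Implicit Arguments. Unset Strict Implicit. Unset Printing Implicit Defensive.
Import Order.TTheory GRing.Theory Num.Theory.
Local Open Scope ring_scope.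

Lemma mulmx1_invmx (R : comUnitRingType) n (A B : 'M[R]_n) :
  A *m B = 1%:M -> invmx A = B.
Proof.
move=> AB1; have [uA _] := mulmx1_unit AB1.
by rewrite -[invmx A]mulmx1 -AB1 mulmxA mulVmx // mul1mx.
Qed.

Lemma invmx_conj (R : comUnitRingType) n (A P : 'M[R]_n) :
  A \in unitmx -> P \in unitmx ->
  invmx (invmx P *m A *m P) = invmx P *m invmx A *m P.
Proof.
move=> uA uP; apply: mulmx1_invmx.
by rewrite -!mulmxA mulKVmx // mulKVmx // mulVmx.
Qed.

Lemma conj_1Bmx (R : comUnitRingType) n (A P : 'M[R]_n) :
  P \in unitmx -> invmx P *m (1%:M - A) *m P = 1%:M - invmx P *m A *m P.
Proof. by move=> uP; rewrite mulmxBr mulmxBl mulmx1 mulVmx. Qed.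

Lemma diag_mulmx_diagE (R : pzRingType) n (a b : 'rV[R]_n) (M : 'M[R]_n) i j :
  (diag_mx a *m M *m diag_mx b) i j = a 0 i * M i j * b 0 j.
Proof. by rewrite mul_mx_diag mul_diag_mx !mxE. Qed.

Lemma posdef_congr (R : realFieldType) n (O P : 'M[R]_n) :
  P \in unitmx -> posdef O -> posdef (P^T *m O *m P).
Proof.
move=> uP [OT O_pos]; split; first by rewrite !trmx_mul trmxK OT mulmxA.
move=> x x_neq0; have -> : x^T *m (P^T *m O *m P) *m x = (P *m x)^T *m O *m (P *m x).
  by rewrite trmx_mul !mulmxA.
apply: O_pos; apply: contra x_neq0 => /eqP Px0.
by rewrite -(mulKmx uP x) Px0 mulmx0.
Qed.

Lemma posdef_diag_gt0 (R : realFieldType) n (S : 'M[R]_n) i :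
  posdef S -> 0 < S i i.
Proof.
move=> [_ S_pos]; have := S_pos (delta_mx i 0).
rewrite trmx_delta -rowE -colE !mxE; apply.
by apply/eqP => /matrixP/(_ i 0)/eqP; rewrite !mxE !eqxx oner_eq0.
Qed.

Section DiagonalCongruence.

Variables (R : realFieldType) (n : nat) (G : mixed_graph n) (d : 'rV[R]_n).
Hypothesis d_neq0 : forall i, d 0 i != 0.

Let D := diag_mx d.

Lemma mulmx_diagV : D *m diag_mx (\row_i (d 0 i)^-1) = 1%:M.
Proof.
by rewrite mulmx_diag -diag_const_mx; congr diag_mx; apply/rowP => i; rewrite !mxE mulfV.
Qed.

Lemma unitmx_diag : D \in unitmx.
Proof. by case: (mulmx1_unit mulmx_diagV). Qed.

Lemma invmx_diag : invmx D = diag_mx (\row_i (d 0 i)^-1).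
Proof. exact: mulmx1_invmx mulmx_diagV. Qed.

Lemma RD_reg_diag_conj L : RD_reg G L -> RD_reg G (invmx D *m L *m D).
Proof.
move=> [L_supp uIL]; split.
  by move=> i j ij_notin; rewrite invmx_diag diag_mulmx_diagE L_supp ?mulr0 ?mul0r.
by rewrite -conj_1Bmx ?unitmx_diag // !unitmx_mul unitmx_inv unitmx_diag uIL.
Qed.

Lemma PD_B_diag_congr O : PD_B G O -> PD_B G (D *m O *m D).
Proof.
move=> [O_pd O_supp]; split.
  by rewrite -[X in X *m O]tr_diag_mx; apply: posdef_congr => //; exact: unitmx_diag.
by move=> i j ij bij; rewrite diag_mulmx_diagE O_supp ?mulr0 ?mul0r.
Qed.

Lemma model_diag_congr S : model G S -> model G (D *m S *m D).
Proof.
have uD := unitmx_diag.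
move=> [L [O [L_reg [O_pd ->]]]]; have [_ uIL] := L_reg.
exists (invmx D *m L *m D), (D *m O *m D); split; first exact: RD_reg_diag_conj.
split; first exact: PD_B_diag_congr.
rewrite -conj_1Bmx // invmx_conj // !trmx_mul !trmx_inv !tr_diag_mx -/D !mulmxA.
by rewrite -!(mulmxA _ (invmx D) D) mulVmx // -(mulmxA _ D (invmx D)) mulmxV // !mulmx1.
Qed.

End DiagonalCongruence.

Section Correlation.

Variables (R : rcfType) (n : nat) (S : 'M[R]_n).
Hypothesis S_diag_gt0 : forall i, 0 < S i i.

Let s := \row_i Num.sqrt (S i i).

Lemma sqrt_diag_neq0 i : Num.sqrt (S i i) != 0.
Proof. by rewrite gt_eqF // sqrtr_gt0. Qed.

Lemma corr_diag_congr :
  corr S = diag_mx (\row_i (s 0 i)^-1) *m S *m diag_mx (\row_i (s 0 i)^-1).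
Proof.
apply/matrixP => i j; rewrite diag_mulmx_diagE !mxE sqrtrM ?ltW // invfM.
by field; rewrite !sqrt_diag_neq0.
Qed.

Lemma diag_congr_corr : S = diag_mx s *m corr S *m diag_mx s.
Proof.
apply/matrixP => i j; rewrite diag_mulmx_diagE !mxE sqrtrM ?ltW //.
by field; rewrite !sqrt_diag_neq0.
Qed.

End Correlation.

Theorem lemma3 (R : rcfType) (n : nat) (G : mixed_graph n) (S : 'M[R]_n) :
  wf_mixed_graph G -> simple_mixed_graph G -> posdef S ->
  (model G S <-> model G (corr S)).
Proof.
move=> _ _ S_pd; have S_diag_gt0 i := posdef_diag_gt0 i S_pd.
have s_neq0 := sqrt_diag_neq0 S_diag_gt0.
split => [S_model | corr_model].
  rewrite corr_diag_congr //; apply: model_diag_congr S_model => i.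
  by rewrite !mxE invr_eq0.
by rewrite [S]diag_congr_corr //; apply: model_diag_congr => // i; rewrite mxE.
Qed.
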